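(* Suppose $S\subseteq\mathbb{N}^{\mathbb{N}}$ is defined by a sentence $\exists x\,\forall y\,\phi$ of $\mathscr{L}_{\max}$, where $\phi$ is quantifier-free. Then $S$ is overguessable.
   Context: $\mathbb{N}^{<\mathbb{N}}$ denotes the finite sequences of naturals. $S\subseteq\mathbb{N}^{\mathbb{N}}$ is overguessable if there is a function $\mu:\mathbb{N}^{<\mathbb{N}}\to\mathbb{N}\cup\{\infty\}$ such that (1) for every $f\in S$, the values $\mu(f(0),\ldots,f(n))$ are bounded by some finite number for all sufficiently large $n$; and (2) for every $f\notin S$, $\mu(f(0),\ldots,f(n))\to\infty$ as $n\to\infty$. The language $\mathscr{L}_{\max}$ is a first-order language extended with ellipses: constant symbols $\mathbf{n}$ (also $\bar n$) for each $n\in\mathbb{N}$; an $n$-ary function symbol $\tilde w$ for each $w:\mathbb{N}^n\to\mathbb{N}$ ($n>0$); an $n$-ary predicate symbol $\tilde p$ for each $p\subseteq\mathbb{N}^n$ ($n>0$); an $\mathbb{N}^{<\mathbb{N}}$-ary function symbol $\tilde G$ for each $G:\mathbb{N}^{<\mathbb{N}}\to\mathbb{N}$ (applicable to any finite number of arguments); a unary function symbol $\mathbf{f}$; and a symbol $\cdots_x$ for each variable $x$. Besides the usual terms, for $\mathbb{N}^{<\mathbb{N}}$-ary $G$, terms $u,v$ and variable $x$, $G(u(\mathbf{0}),\cdots_x,u(v))$ is a term with free variables $(FV(u)\setminus\{x\})\cup FV(v)$. Formulas are built as usual. For $f:\mathbb{N}\to\mathbb{N}$, $\mathscr{M}_f$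 is the structure on $\mathbb{N}$ interpreting every symbol as the object it names and $\mathbf{f}$ as $f$; terms are evaluated as usual, plus $G(u(\mathbf{0}),\cdots_x,u(v))^{s}=G\big(u(x|\mathbf{0})^{s},\ldots,u(x|\overline{v^{s}})^{s}\big)$ under an assignment $s$, where $u(x|c)$ is substitution of the constant $c$ for $x$ in $u$. A sentence $\phi$ defines $S\subseteq\mathbb{N}^{\mathbb{N}}$ if for every $f:\mathbb{N}\to\mathbb{N}$, $\mathscr{M}_f\models\phi$ iff $f\in S$. *)

From mathcomp Require Import all_boot.
Set Implicit Arguments. Unset Strict Implicit. Unset Printing Implicit Defensive.

Inductive term : Type :=
| TVar  : nat -> term
| TConst : nat -> term
| TApp  : forall n : nat, (('I_n.+1 -> nat) -> nat) ->
            ('I_n.+1 -> term) -> term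
| TG    : (seq nat -> nat) -> forall n : nat, ('I_n -> term) -> term
| Tf    : term -> term
| TEll  : (seq nat -> nat) -> nat -> term -> term -> term. (* G(u(0),...x,u(v)) : TEll G x u v *)

Inductive formula : Type :=
| FEq   : term -> term -> formula
| FPred : forall n : nat, (('I_n.+1 -> nat) -> Prop) ->
            ('I_n.+1 -> term) -> formula
| FNot  : formula -> formula
| FAnd  : formula -> formula -> formula
| FOr   : formula -> formula -> formula
| FImp  : formula -> formula -> formula
| FAll  : nat -> formula -> formula
| FEx   : nat -> formula -> formula.

Fixpoint free_t (t : term) (z : nat) : bool :=
  match t with
  | TVar k => k == z
  | TConst _ => false
  | TApp n _ args => [exists i, free_t (args i) z]
  | TG _ n args => [exists i, free_t (args i) z]
  | Tf u => free_t u z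
  | TEll _ x u v => ((z != x) && free_t u z) || free_t v z
  end.

Fixpoint free_f (phi : formula) (z : nat) : bool :=
  match phi with
  | FEq a b => free_t a z || free_t b z
  | FPred n _ args => [exists i, free_t (args i) z]
  | FNot p => free_f p z
  | FAnd p q | FOr p q | FImp p q => free_f p z || free_f q z
  | FAll x p | FEx x p => (z != x) && free_f p z
  end.

Definition sentence (phi : formula) : Prop := forall z, ~~ free_f phi z.

Fixpoint qfree (phi : formula) : bool :=
  match phi with
  | FEq _ _ | FPred _ _ _ => true
  | FNot p => qfree p
  | FAnd p q | FOr p q | FImp p q => qfree p && qfree q
  | FAll _ _ | FEx _ _ => false
  end.

Definition upd (s : nat -> nat) (x c : nat) : nat -> nat :=
  fun k => if k == x then c else s k.

(* For the ellipsis term, the value of the substituted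
   term u(x|c) under s is computed as the value of u under s[x:=c]
   (the standard substitution lemma, c being a closed constant). *)
Fixpoint eval (f : nat -> nat) (t : term) (s : nat -> nat) : nat :=
  match t with
  | TVar k => s k
  | TConst n => n
  | TApp n w args => w (fun i => eval f (args i) s)
  | TG G n args => G [seq eval f (args i) s | i <- enum 'I_n]
  | Tf u => f (eval f u s)
  | TEll G x u v =>
      G [seq eval f u (upd s x c) | c <- iota 0 (eval f v s).+1]
  end.

Fixpoint sat (f : nat -> nat) (phi : formula) (s : nat -> nat) : Prop :=
  match phi with
  | FEq a b => eval f a s = eval f b s
  | FPred n p args => p (fun i => eval f (args i) s)
  | FNot p => ~ sat f p s
  | FAnd p q => sat f p s /\ sat f q s
  | FOr p q => sat f p s \/ sat f q s
  | FImp p q => sat f p s -> sat f q s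
  | FAll x p => forall c, sat f p (upd s x c)
  | FEx x p => exists c, sat f p (upd s x c)
  end.

(* M_f |= phi for a sentence phi (assignment irrelevant; we use the zero one) *)
Definition models (f : nat -> nat) (phi : formula) : Prop := sat f phi (fun _ => 0).

Definition defines (phi : formula) (S : (nat -> nat) -> Prop) : Prop :=
  sentence phi /\ forall f, models f phi <-> S f.

(* N ∪ {∞} as option nat, None = ∞ *)
Definition initseg (f : nat -> nat) (n : nat) : seq nat := mkseq f n.+1.

Definition overguessable (S : (nat -> nat) -> Prop) : Prop :=
  exists mu : seq nat -> option nat,
    (forall f, S f -> exists B N, forall n, N <= n ->
        exists k, mu (initseg f n) = Some k /\ k <= B) /\
    (forall f, ~ S f -> forall B, exists N, forall n, N <= n ->
        match mu (initseg f n) with None => true | Some k => B < k end).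

From Stdlib Require Import ClassicalEpsilon FunctionalExtensionality Classical.
From mathcomp Require Import all_boot.

Set Implicit Arguments. Unset Strict Implicit.

(* The value of a term or quantifier-free formula in [M_f] depends
   only on a finite initial segment of f, so for each witness a the set of f
   satisfying [forall y, phi(a, y)] is closed, and S is a countable union of
   closed sets.  Such a set is overguessed by letting mu(sigma) be the least
   a <= |sigma| for which some extension of sigma lies in the a-th closed set:
   along f in S this stays below a true witness, while along f outside S every
   a <= B is eventually ruled out by a finite prefix. *)

Definition eventually (P : nat -> Prop) : Prop := exists N, forall n, N <= n -> P n.

Lemma eventually_ge m : eventually (fun n => m <= n).
Proof. by exists m. Qed.

Lemma eventually_impl (P Q : nat -> Prop) :
  eventually P -> (forall n, P n -> Q n) -> eventually Q.
Proof. by move=> [N HP] PQ; exists N => n /HP /PQ. Qed.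

Lemma eventually_and (P Q : nat -> Prop) :
  eventually P -> eventually Q -> eventually (fun n => P n /\ Q n).
Proof.
move=> [N HP] [M HQ]; exists (maxn N M) => n.
by rewrite geq_max => /andP[/HP hP /HQ hQ].
Qed.

Lemma eventually_all_in (I : eqType) (r : seq I) (P : I -> nat -> Prop) :
  (forall i, eventually (P i)) -> eventually (fun n => forall i, i \in r -> P i n).
Proof.
move=> HP; elim: r => [|j r IH]; first by exists 0.
apply: (eventually_impl (eventually_and (HP j) IH)) => n [Pj Pr] i.
by rewrite inE => /orP[/eqP->|/Pr].
Qed.

Lemma eventually_all_fin (I : finType) (P : I -> nat -> Prop) :
  (forall i, eventually (P i)) -> eventually (fun n => forall i, P i n).
Proof.
move=> /(eventually_all_in (enum I)) HP.
by apply: (eventually_impl HP) => n Pn i; apply: Pn; rewrite mem_enum.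
Qed.

Lemma eventually_all_le (P : nat -> nat -> Prop) V :
  (forall i, eventually (P i)) -> eventually (fun n => forall i, i <= V -> P i n).
Proof.
move=> /(eventually_all_in (iota 0 V.+1)) HP.
by apply: (eventually_impl HP) => n Pn i leiV; apply: Pn; rewrite mem_iota.
Qed.

Definition agree (g f : nat -> nat) (N : nat) : Prop := forall i, i < N -> g i = f i.

Lemma eval_eventually_stable f t s :
  eventually (fun N => forall g, agree g f N -> eval g t s = eval f t s).
Proof.
elim: t s => [k|m|m w args IH|G m args IH|u IH|G x u IHu v IHv] s.
- by exists 0.
- by exists 0.
- apply: (eventually_impl (eventually_all_fin (fun i => IH i s))) => N HN g Hg /=.
  by congr (w _); apply: functional_extensionality => i; apply: HN.
- apply: (eventually_impl (eventually_all_fin (fun i => IH i s))) => N HN g Hg /=.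
  by congr (G _); apply: eq_map => i; apply: HN.
- apply: (eventually_impl (eventually_and (IH s) (eventually_ge (eval f u s).+1))).
  by move=> N [HN leN] g Hg /=; rewrite HN //; apply: Hg.
- have Hu := eventually_all_le (eval f v s) (fun c => IHu (upd s x c)).
  apply: (eventually_impl (eventually_and (IHv s) Hu)) => N [HNv HNu] g Hg.
  cbn [eval]; rewrite HNv //; congr (G _); apply/eq_in_map => c.
  by rewrite mem_iota ltnS => /andP[_ lec]; apply: HNu.
Qed.

Lemma sat_eventually_stable f phi s : qfree phi ->
  eventually (fun N => forall g, agree g f N -> (sat g phi s <-> sat f phi s)).
Proof.
elim: phi s => [a b|m p args|p IH|p IHp q IHq|p IHp q IHq|p IHp q IHq|//|//] s /= qf.
- apply: (eventually_impl
    (eventually_and (eval_eventually_stable f a s) (eval_eventually_stable f b s))).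
  by move=> N [Ha Hb] g Hg; rewrite Ha ?Hb.
- have Hargs := eventually_all_fin (fun i => eval_eventually_stable f (args i) s).
  apply: (eventually_impl Hargs) => N HN g Hg.
  by have -> : (fun i => eval g (args i) s) = (fun i => eval f (args i) s)
    by apply: functional_extensionality => i; apply: HN.
- by apply: (eventually_impl (IH s qf)) => N HN g /HN; tauto.
all: move/andP: qf => [/IHp Hp /IHq Hq].
all: apply: (eventually_impl (eventually_and (Hp s) (Hq s))) => N [HNp HNq] g Hg.
all: by move: (HNp g Hg) (HNq g Hg); tauto.
Qed.

Definition holds (P : Prop) : bool := if excluded_middle_informative P then true else false.

Lemma holdsP (P : Prop) : reflect P (holds P).
Proof. by rewrite /holds; case: excluded_middle_informative => ?; constructor. Qed.

Lemma find_iota_le (p : pred nat) n a : a < n -> p a -> find p (iota 0 n) <= a.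
Proof.
move=> ltan pa; rewrite leqNgt; apply/negP => /(before_find 0).
by rewrite nth_iota // add0n pa.
Qed.

Lemma find_iota_gt (p : pred nat) n B :
  B < n -> (forall a, a <= B -> ~~ p a) -> B < find p (iota 0 n).
Proof.
move=> ltBn notp; rewrite ltnNge; apply/negP => leB.
have ltfn : find p (iota 0 n) < n := leq_ltn_trans leB ltBn.
have has_p : has p (iota 0 n) by rewrite has_find size_iota.
by have := nth_find 0 has_p; rewrite nth_iota // add0n (negbTE (notp _ leB)).
Qed.

Lemma agree_initseg g f n :
  (forall i, i < size (initseg f n) -> g i = nth 0 (initseg f n) i) <-> agree g f n.+1.
Proof.
by rewrite size_mkseq; split=> H i lti; rewrite H ?nth_mkseq.
Qed.

Section UnionOfClosedSets.

Variable R : (nat -> nat) -> nat -> Prop.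

Hypothesis R_closed :
  forall f a, ~ R f a -> eventually (fun N => forall g, agree g f N -> ~ R g a).

Definition extendable (sigma : seq nat) (a : nat) : Prop :=
  exists g, (forall i, i < size sigma -> g i = nth 0 sigma i) /\ R g a.

Definition guess (sigma : seq nat) : nat :=
  find (fun a => holds (extendable sigma a)) (iota 0 (size sigma)).

Lemma guess_le_witness f a n : R f a -> a <= n -> guess (initseg f n) <= a.
Proof.
move=> Rfa lean; apply: find_iota_le; first by rewrite size_mkseq ltnS.
by apply/holdsP; exists f; split => //; apply/agree_initseg.
Qed.

Lemma guess_diverges f : (forall a, ~ R f a) ->
  forall B, eventually (fun n => B < guess (initseg f n)).
Proof.
move=> notR B.
apply: (eventually_impl (eventually_and (eventually_all_le B (fun a => R_closed (notR a)))
  (eventually_ge B))) => n [sep leBn].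
apply: find_iota_gt; first by rewrite size_mkseq ltnS.
move=> a leaB; apply/holdsP => -[g [/agree_initseg Hg Rga]].
by apply: (sep a leaB g) => // i /ltnW; apply: Hg.
Qed.

Lemma union_of_closed_overguessable (S : (nat -> nat) -> Prop) :
  (forall f, S f <-> exists a, R f a) -> overguessable S.
Proof.
move=> defS; exists (fun sigma => Some (guess sigma)); split.
- move=> f /defS [a Rfa]; exists a, a => n lean.
  by exists (guess (initseg f n)); split => //; apply: guess_le_witness.
- move=> f notS B; apply: guess_diverges => a Rfa.
  by apply: notS; apply/defS; exists a.
Qed.

End UnionOfClosedSets.

Theorem lemma4p4 (S : (nat -> nat) -> Prop) (x y : nat) (phi : formula) :
  qfree phi -> defines (FEx x (FAll y phi)) S -> overguessable S.
Proof.
move=> qf [_ defS].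
pose env a b := upd (upd (fun _ => 0) x a) y b.
apply: (@union_of_closed_overguessable (fun f a => forall b, sat f phi (env a b))).
- move=> f a /not_all_ex_not [b notsat].
  apply: (eventually_impl (sat_eventually_stable f (env a b) qf)) => N HN g Hg Rga.
  by apply: notsat; apply/(HN g Hg).
- by move=> f; rewrite -defS.
Qed.
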